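(* Let $(X,T)$ be random variables with $X$ taking values in a countable set $\mathcal{X}$ and $T\in\{0,1\}$, with joint distribution $P$. Let $Q(T=1\mid X)$ be a propensity score model, i.e. a function $x\mapsto Q(T=1\mid X=x)\in(0,1)$. Suppose $Q$ is not calibrated, in the sense that there exists $q'\in(0,1)$ with $P\big(Q(T=1\mid X)=q'\big)>0$ and $P\big(T=1 \mid Q(T=1\mid X)=q'\big)\neq q'$. Then there exists an outcome function $g:\mathcal{X}\times\{0,1\}\to\mathbb{R}$ such that, if the outcome is $Y=g(X,T)$ (so that the potential outcomes are $Y(t)=g(X,t)$ and the true average treatment effect is $\tau=\mathbb{E}[g(X,1)-g(X,0)]$), the IPTW estimator computed from $n$ i.i.d. samples $(X^{(i)},T^{(i)},Y^{(i)})$, $$\hat\tau_n=\frac1n\sum_{i=1}^n\left(\frac{T^{(i)}Y^{(i)}}{Q(T=1\mid X^{(i)})}-\frac{(1-T^{(i)})Y^{(i)}}{1-Q(T=1\mid X^{(i)})}\right),$$ satisfies $\lim_{n\to\infty}\Pr(\hat\tau_n=\tau)=0$.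
   Context: Setting: observational data of i.i.d. units with features $X$, binary treatment $T$ and scalar outcome $Y$. A propensity score model $Q(T=1\mid X)$ is calibrated if $P(T=1\mid Q(T=1\mid X)=q)=q$ for all $q$; the IPTW (inverse probability of treatment weighting) estimator is as displayed in the claim. *)

From HB Require Import structures.
From mathcomp Require Import all_boot all_order all_algebra.
From mathcomp Require Import all_classical all_reals all_analysis.
Set Implicit Arguments. Unset Strict Implicit. Unset Printing Implicit Defensive.
Import Order.TTheory GRing.Theory Num.Theory.
Local Open Scope classical_set_scope.
Local Open Scope ring_scope.

Section Defs.
Variables (R : realType) (X : countType).

(* joint pmf of (X,T): p x t = P(X = x, T = t) *)
Definition is_pmf (p : X -> bool -> R) : Prop :=
  (forall x t, 0 <= p x t) /\
  (\esum_(z in [set: X * bool]) (p z.1 z.2)%:E = 1)%E.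

Definition probXT (p : X -> bool -> R) (A : set (X * bool)) : \bar R :=
  \esum_(z in A) (p z.1 z.2)%:E.

Definition condprob (p : X -> bool -> R) (A B : set (X * bool)) : R :=
  fine (probXT p (A `&` B)) / fine (probXT p B).

Definition not_calibrated (p : X -> bool -> R) (Q : X -> R) : Prop :=
  exists q', 0 < q' < 1 /\
    (0 < probXT p [set z | Q z.1 = q'])%E /\
    condprob p [set z | z.2 = true] [set z | Q z.1 = q'] != q'.

Definition has_expect (p : X -> bool -> R) (f : X * bool -> R) : Prop :=
  summable [set: X * bool] (fun z => (p z.1 z.2 * f z)%:E).

Definition expect (p : X -> bool -> R) (f : X * bool -> R) : R :=
  fine (\esum_(z in [set: X * bool]) (fun z => (p z.1 z.2 * f z)%:E)^\+ z)%E -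
  fine (\esum_(z in [set: X * bool]) (fun z => (p z.1 z.2 * f z)%:E)^\- z)%E.

Definition iptw (Q : X -> R) (g : X -> bool -> R) (n : nat)
    (s : n.-tuple (X * bool)) : R :=
  n%:R^-1 * \sum_(i < n)
    (let x := (tnth s i).1 in let t := (tnth s i).2 in
     let y := g x t in
     (t%:R * y) / Q x - ((1 - t%:R) * y) / (1 - Q x)).

Definition prob_iid (p : X -> bool -> R) (n : nat)
    (A : set (n.-tuple (X * bool))) : \bar R :=
  \esum_(s in A) (\prod_(i < n) p (tnth s i).1 (tnth s i).2)%:E.

End Defs.

From mathcomp Require Import all_boot all_order all_algebra.
From mathcomp Require Import all_classical all_reals all_analysis.
From mathcomp Require Import ring lra.
Import Order.TTheory GRing.Theory Num.Theory.
Local Open Scope classical_set_scope.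
Local Open Scope ring_scope.

(* Take the outcome Y = 1{T = 1, Q(X) = q'}.  Then tau = P(Q(X) = q') =: pi and
   the IPTW estimate is N_n / (n q'), where N_n counts the samples with T = 1
   and Q(X) = q'; so the estimate equals tau only if N_n = n pi q'.  N_n is
   binomial with parameter r = P(T = 1, Q(X) = q'), and non-calibration at q'
   says precisely r <> pi q'.  The tilt exp(th (N_n - n pi q')) is 1 on that
   event and, for a suitable th of the sign of pi q' - r, has expectation
   c^n with c < 1; hence the event has probability at most c^n. *)

Lemma esumZl_le {R : realType} {T : choiceType} {S : set T} {a : T -> \bar R} {c : R} :
  0 <= c -> (forall i, 0 <= a i)%E ->
  (\esum_(i in S) (c%:E * a i) <= c%:E * \esum_(i in S) a i)%E.
Proof.
move=> c0 a0; apply: ge_ereal_sup => _ [F [finF FS] <-].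
rewrite fsbig_finite// -ge0_sume_distrr // -fsbig_finite//.
apply: lee_pmul => //; first exact: fsume_ge0.
by apply: ereal_sup_ubound; exists F.
Qed.

Section esum_tuple.
Context {R : realType} {T : choiceType}.

Lemma esum_tupleS n (f : n.+1.-tuple T -> \bar R) : (forall s, 0 <= f s)%E ->
  \esum_(s in [set: n.+1.-tuple T]) f s =
  \esum_(z in [set: T]) \esum_(t in [set: n.-tuple T]) f [tuple of z :: t].
Proof.
move=> f0; rewrite esum_esum // [in RHS](_ : _ `*`` _ = [set: T * n.-tuple T]).
  apply: (reindex_esum _ _ (fun zt : T * n.-tuple T => [tuple of zt.1 :: zt.2])).
  split.
  - by [].
  - by move=> [z t] [z' t'] _ _ /(congr1 val) [-> /val_inj ->].
  - by move=> s _; exists (thead s, behead_tuple s) => //=; rewrite [RHS]tuple_eta.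
by apply/seteqP; split => -[].
Qed.

Lemma esum_prod_tuple_le (h : T -> R) (M : R) : (forall z, 0 <= h z) ->
  (\esum_(z in [set: T]) (h z)%:E <= M%:E)%E ->
  forall n, (\esum_(s in [set: n.-tuple T]) (\prod_(i < n) h (tnth s i))%:E
             <= (M ^+ n)%:E)%E.
Proof.
move=> h0 hM.
have M0 : 0 <= M by rewrite -lee_fin (le_trans _ hM) // esum_ge0 // => z _; rewrite lee_fin.
have prod0 n (s : n.-tuple T) : (0 <= (\prod_(i < n) h (tnth s i))%:E)%E.
  by rewrite lee_fin prodr_ge0.
elim=> [|n IH].
  rewrite (_ : [set: 0.-tuple T] = [set [tuple]]); last first.
    by apply/seteqP; split => s //= _; rewrite tuple0.
  by rewrite esum_set1 ?big_ord0.
have prodS (z : T) (t : n.-tuple T) :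
    \prod_(i < n.+1) h (tnth [tuple of z :: t] i) = h z * \prod_(i < n) h (tnth t i).
  by rewrite big_ord_recl; congr (_ * _); apply: eq_bigr => i _; rewrite tnthS.
rewrite esum_tupleS //.
under eq_esum => z _ do under eq_esum => t _ do rewrite prodS EFinM.
apply: (@le_trans _ _ (\esum_(z in [set: T]) ((M ^+ n)%:E * (h z)%:E))%E).
  apply: le_esum => z _; apply: le_trans (esumZl_le (h0 z) (prod0 n)) _.
  by rewrite muleC lee_pmul // ?lee_fin // esum_ge0.
apply: le_trans (esumZl_le (exprn_ge0 n M0) _) _ => [z|].
  by rewrite lee_fin.
by rewrite exprSr EFinM lee_pmul // ?lee_fin ?exprn_ge0 // esum_ge0 // => z _; rewrite lee_fin.
Qed.

End esum_tuple.

Section weights.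
Context {R : realType} {X : countType} {p : X -> bool -> R}.
Hypothesis p_ge0 : forall x t, 0 <= p x t.
Hypothesis p_sum1 : (\esum_(z in [set: X * bool]) (p z.1 z.2)%:E = 1)%E.

Let pE_ge0 z : (0 <= (p z.1 z.2)%:E)%E.
Proof. by rewrite lee_fin. Qed.

Lemma probXT_ge0 A : (0 <= probXT p A)%E.
Proof. exact: esum_ge0. Qed.

Lemma probXT_le1 A : (probXT p A <= 1)%E.
Proof.
rewrite -p_sum1 /probXT esum_mkcond.
by apply: le_esum => z _; case: ifP.
Qed.

Lemma probXT_fin_num A : probXT p A \is a fin_num.
Proof. by rewrite ge0_fin_numE ?probXT_ge0 // (le_lt_trans (probXT_le1 A)) ?ltry. Qed.

Lemma probXT_setC A : fine (probXT p (~` A)) = 1 - fine (probXT p A).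
Proof.
have : (probXT p A + probXT p (~` A) = 1)%E by rewrite -p_sum1 [RHS](esumID A) ?setTI.
rewrite -(fineK (probXT_fin_num A)) -(fineK (probXT_fin_num (~` A))) -EFinD.
by move=> [<-] /=; rewrite addrC addKr.
Qed.

Let indic_ge0 A z : (0 <= (p z.1 z.2 * \1_A z)%:E)%E.
Proof. by rewrite EFinM mule_ge0 // lee_fin. Qed.

Lemma esum_indic A :
  \esum_(z in [set: X * bool]) (p z.1 z.2 * \1_A z)%:E = probXT p A.
Proof.
rewrite /probXT [RHS]esum_mkcond; apply: eq_esum => z _.
by rewrite indicE; case: (z \in A); rewrite ?mulr1 ?mulr0.
Qed.

Lemma has_expect_indic A : has_expect p \1_A.
Proof.
rewrite /has_expect /summable.
under eq_esum => z _ do rewrite gee0_abs ?indic_ge0 //.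
by rewrite esum_indic ltey_eq probXT_fin_num.
Qed.

Lemma expect_indic A : expect p \1_A = fine (probXT p A).
Proof.
rewrite /expect.
under eq_esum => z _ do rewrite (@ge0_funeposE _ _ setT) ?inE //.
under [X in _ - fine X]eq_esum => z _ do rewrite (@ge0_funenegE _ _ setT) ?inE //.
by rewrite esum_indic esum1 // subr0.
Qed.

Lemma esum_expR_indic_le A th :
  (\esum_(z in [set: X * bool]) (p z.1 z.2 * expR (th * \1_A z))%:E
    <= (fine (probXT p A) * expR th + (1 - fine (probXT p A)))%:E)%E.
Proof.
rewrite (esumID A) ?setTI; last by move=> z _; rewrite lee_fin mulr_ge0 ?expR_ge0.
have -> : \esum_(z in A) (p z.1 z.2 * expR (th * \1_A z))%:E =
          \esum_(z in A) ((expR th)%:E * (p z.1 z.2)%:E)%E.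
  by apply: eq_esum => z /mem_set Az; rewrite indicE Az mulr1 mulrC.
have -> : \esum_(z in ~` A) (p z.1 z.2 * expR (th * \1_A z))%:E = probXT p (~` A).
  apply: eq_esum => z /mem_set; rewrite in_setC indicE => /negbTE ->.
  by rewrite mulr0 expR0 mulr1.
rewrite -(fineK (probXT_fin_num (~` A))) probXT_setC [X in (_ <= X)%E]EFinD leeD2r //.
apply: le_trans (esumZl_le (expR_ge0 th) pE_ge0) _.
by rewrite -/(probXT p A) -(fineK (probXT_fin_num A)) -EFinM mulrC.
Qed.

Lemma le_prob_iid {n} {A B : set (n.-tuple (X * bool))} :
  A `<=` B -> (prob_iid p A <= prob_iid p B)%E.
Proof.
move=> AB; rewrite /prob_iid [X in (X <= _)%E]esum_mkcond [X in (_ <= X)%E]esum_mkcond.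
apply: le_esum => s _; case: ifPn => [/set_mem/AB/mem_set -> //|_].
by case: ifP => _; rewrite // lee_fin prodr_ge0.
Qed.

Lemma prob_iid_sum_eq_le (f : X * bool -> R) (a th M : R) n :
  (\esum_(z in [set: X * bool]) (p z.1 z.2 * expR (th * f z))%:E <= M%:E)%E ->
  (prob_iid p [set s : n.-tuple (X * bool) | (\sum_(i < n) f (tnth s i) = n%:R * a)%R]
    <= ((M * expR (- (th * a))) ^+ n)%:E)%E.
Proof.
move=> hM; pose h z := p z.1 z.2 * expR (th * f z).
have h_ge0 z : 0 <= h z by rewrite mulr_ge0 // expR_ge0.
pose K := expR (- (th * a)) ^+ n.
have K_ge0 : 0 <= K by rewrite exprn_ge0 // expR_ge0.
apply: (@le_trans _ _ (\esum_(s in [set: n.-tuple (X * bool)])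
                        (K%:E * (\prod_(i < n) h (tnth s i))%:E))%E).
  rewrite /prob_iid esum_mkcond; apply: le_esum => s _.
  case: ifPn => [/set_mem /= sum_fa|_]; last by rewrite -EFinM lee_fin mulr_ge0 ?prodr_ge0.
  (* on the event, the tilt factor expR (th * \sum_i f s_i) cancels K *)
  rewrite -EFinM lee_fin /h big_split /= -expR_sum -mulr_sumr sum_fa.
  by rewrite /K -expRM_natl mulrCA -expRD mulrN mulrCA addNr expR0 mulr1.
apply: le_trans (esumZl_le K_ge0 _) _ => [s|]; first by rewrite lee_fin prodr_ge0.
rewrite exprMn mulrC EFinM lee_pmul // ?lee_fin // ?esum_ge0 // => [s _|].
  by rewrite lee_fin prodr_ge0.
exact: esum_prod_tuple_le.
Qed.

End weights.

Lemma exists_bernoulli_tilt_lt1 {R : realType} {r s : R} :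
  0 <= r <= 1 -> 0 < s -> r != s ->
  exists th : R, 0 <= (r * expR th + (1 - r)) * expR (- (th * s)) < 1.
Proof.
move=> /andP[r0 r1] s0 rs.
suff [th tilt] : exists th, r * expR th + (1 - r) < expR (th * s).
  exists th; rewrite expRN ltr_pdivrMr ?expR_gt0 // mul1r tilt andbT.
  by rewrite mulr_ge0 ?invr_ge0 ?expR_ge0 // addr_ge0 ?mulr_ge0 ?expR_ge0 ?subr_ge0.
have expR_le_inv (x : R) : expR x * (1 - x) <= 1.
  have := ler_wpM2l (ltW (expR_gt0 x)) (expR_ge1Dx (- x)).
  by rewrite expRN mulfV ?gt_eqF ?expR_gt0.
have s0' : s != 0 by rewrite gt_eqF.
(* With |th| = |s - r| / (2 s), the bounds 1 + x <= expR x and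
   expR x * (1 - x) <= 1 reduce the claim to r < (r + s) / 2, resp. r > (r + s) / 2. *)
case: (ltgtP r s) rs => // rs _.
- pose th := (s - r) / (2 * s).
  have th_s : th * s = (s - r) / 2 by rewrite /th; field.
  have th0 : 0 < th by rewrite divr_gt0 ?subr_gt0 ?mulr_gt0.
  have th1 : th < 1 by rewrite /th ltr_pdivrMr ?mulr_gt0 //; lra.
  exists th; apply: lt_le_trans (expR_ge1Dx _).
  have := expR_le_inv th; have := expR_gt0 th; nra.
- pose et := (r - s) / (2 * s).
  have et_s : et * s = (r - s) / 2 by rewrite /et; field.
  have et0 : 0 < et by rewrite divr_gt0 ?subr_gt0 ?mulr_gt0.
  exists (- et); apply: lt_le_trans (expR_ge1Dx _).
  have := expR_le_inv (- et); rewrite opprK; have := expR_gt0 (- et); nra.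
Qed.

Lemma geometric_squeeze_cvge0 {R : realType} (u : nat -> \bar R) (c : R) :
  0 <= c < 1 -> (forall n, (0 <= u n <= (c ^+ n)%:E)%E) -> u @ \oo --> 0%E.
Proof.
move=> /andP[c0 c1] u_bnd.
apply: (@squeeze_cvge _ _ _ _ (fun=> 0%E) _ (fun n => (c ^+ n)%:E)).
- exact: nearW.
- exact: cvg_cst.
- by apply: cvg_EFin; [exact: nearW | apply: cvg_expr; rewrite ger0_norm].
Qed.

Lemma indic_treated_contrast {R : realType} {X : Type} (P : X -> Prop) :
  let B := [set z : X * bool | z.2 = true] `&` [set z | P z.1] in
  (fun z => \1_B (z.1, true) - \1_B (z.1, false)) = \1_[set z : X * bool | P z.1] :> (_ -> R).
Proof.
move=> B; apply/funext => -[x t]; rewrite !indicE /=.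
have /negbTE -> : (x, false) \notin B by apply/negP => /set_mem [].
have -> : ((x, true) \in B) = ((x, t) \in [set z | P z.1]).
  by apply/idP/idP => /set_mem; [case=> _ /mem_set | move=> xS; apply/mem_set].
by rewrite subr0.
Qed.

Lemma iptw_indic {R : realType} {X : countType} (Q : X -> R) (q : R)
    (B : set (X * bool)) n (s : n.-tuple (X * bool)) :
  B `<=` [set z | z.2 = true /\ Q z.1 = q] ->
  iptw Q (fun x t => \1_B (x, t)) s = n%:R^-1 * (\sum_(i < n) \1_B (tnth s i)) / q.
Proof.
move=> sB; rewrite /iptw -mulrA mulr_suml; congr (_ * _); apply: eq_bigr => i _.
case: (tnth s i) => x t /=; rewrite indicE.
case: (boolP ((x, t) \in B)) => [/set_mem/sB [/= -> ->]|_].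
  by rewrite subrr !mul1r !mul0r subr0.
by rewrite !mulr0 !mul0r subrr.
Qed.

Theorem mainTheorem1 (R : realType) (X : countType)
    (p : X -> bool -> R) (Q : X -> R) :
  is_pmf p ->
  (forall x, 0 < Q x < 1) ->
  not_calibrated p Q ->
  exists g : X -> bool -> R,
    has_expect p (fun z => g z.1 true - g z.1 false) /\
    let tau := expect p (fun z => g z.1 true - g z.1 false) in
    (fun n => prob_iid p [set s : n.-tuple (X * bool) | iptw Q g s = tau])
      @ \oo --> (0 : \bar R).
Proof.
move=> [p_ge0 p_sum1] _ [q [/andP[q_gt0 _] [PS_gt0 ncal]]].
set S := [set z : X * bool | Q z.1 = q] in PS_gt0 ncal.
set B := [set z : X * bool | z.2 = true] `&` S in ncal.
exists (fun x t => \1_B (x, t)); rewrite /= (indic_treated_contrast (fun x => Q x = q)).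
rewrite expect_indic //; split; first exact: has_expect_indic.
set pi := fine (probXT p S); set r := fine (probXT p B).
have pi_gt0 : 0 < pi by rewrite -lte_fin fineK ?probXT_fin_num.
have r01 : 0 <= r <= 1.
  by rewrite -!lee_fin fineK ?probXT_fin_num ?probXT_ge0 ?probXT_le1.
have r_neq : r != pi * q.
  apply: contra ncal => /eqP r_eq; apply/eqP.
  by rewrite /condprob -/B -/pi -/r r_eq mulrAC divff ?mul1r // gt_eqF.
have [th c01] := exists_bernoulli_tilt_lt1 r01 (mulr_gt0 pi_gt0 q_gt0) r_neq.
apply: geometric_squeeze_cvge0 c01 _ => n.
rewrite esum_ge0 /= => [|s _]; last by rewrite lee_fin prodr_ge0.
apply: le_trans (le_prob_iid p_ge0 _)
  (prob_iid_sum_eq_le p_ge0 _ _ _ _ n (esum_expR_indic_le p_ge0 p_sum1 B th)).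
move=> s /=; rewrite (iptw_indic _ q) // => iptw_pi.
have n_neq0 : n%:R != 0 :> R.
  by apply/eqP => n0; move: pi_gt0; rewrite -iptw_pi n0 invr0 !mul0r ltxx.
by rewrite -iptw_pi; field; rewrite n_neq0 gt_eqF.
Qed.
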